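(* Let $G$ be a PMCFG and $\mathcal{M}(G)$ the automaton with respect to $G$. If $G$ is a $k$-MCFG, then $\mathcal{M}(G)$ is $k$-restricted.
   Context: Composition functions. Fix variables $x_i^j$ ($i,j\in\mathbb{N}_+$). For $s_1,\dots,s_\ell,s\in\mathbb{N}_+$ a composition function of sort $(s_1\cdots s_\ell,s)$ over $\Sigma$ is given by a tuple $[u_1,\dots,u_s]$ with each $u_i$ a string over $\Sigma\cup\{x_i^j : i\in[\ell], j\in[s_i]\}$; it maps $((w_1^1,\dots,w_1^{s_1}),\dots,(w_\ell^1,\dots,w_\ell^{s_\ell}))$ to the $s$-tuple obtained from $(u_1,\dots,u_s)$ by replacing each $x_i^j$ by $w_i^j$. Fan-out is $s$; linear means every variable occurs at most once in $u_1\cdots u_s$. PMCFG/MCFG. A PMCFG is $G=(N,\Sigma,I,R)$ with $N$ a finite set of nonterminals each with a sort in $\mathbb{N}_+$, $I$ a set of nonterminals of sort 1, and $R$ a finite set of rules $A\to f(A_1,\dots,A_\ell)$ where $f$ has sort $(s_1\cdots s_\ell,s)$, $A$ has sort $s$, $A_i$ has sort $s_i$. An MCFG has only linear composition functions; a $k$-MCFG is an MCFG with all rules of fan-out at most $k$. Tree stacks and TSA. A tree stack over $\Gamma$ ($@\notin\Gamma$) is $(\xi,\rho)$ with $\xi:\mathbb{N}_+^*\rightharpoonup\Gamma\cup\{@\}$ of finite prefix-closed domain, $\xi(\varepsilon)=@$, labels elsewhere in $\Gamma$, and $\rho\in\mathrm{dom}(\xi)$. Predicates: $\mathrm{bottom}$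 ($\rho=\varepsilon$), $\mathrm{equals}(\gamma)$ ($\xi(\rho)=\gamma$), and ''all''. Instructions: $\mathrm{id}$; $\mathrm{push}_n(\gamma)$ (defined iff $\rho n\notin\mathrm{dom}(\xi)$, result $(\xi[\rho n\mapsto\gamma],\rho n)$); $\mathrm{up}_n$ (defined iff $\rho n\in\mathrm{dom}(\xi)$, result $(\xi,\rho n)$); $\mathrm{down}$ ($(\xi,\rho n)\mapsto(\xi,\rho)$); $\mathrm{set}(\gamma)$ (defined iff $\rho\ne\varepsilon$, result $(\xi[\rho\mapsto\gamma],\rho)$). Initial tree stack $(\{\varepsilon\mapsto@\},\varepsilon)$. A TSA has finite states, initial state, final states and finitely many transitions $(q,\omega,p,f,q')$ ($\omega\in\Sigma\cup\{\varepsilon\}$); $(q,c,w)\vdash_\tau(q',c',w')$ iff $w=\omega w'$, $c\in p$, $f(c)=c'$ defined. A valid run goes from (initial state, initial tree stack, $w$) to (final state, some tree stack, $\varepsilon$) and recognises $w$. $k$-restricted: for every valid run and every position $\rho$, the number of transitions in the run having a $\mathrm{push}$- or $\mathrm{up}$-instruction after which the stack pointer equals $\rho$ is at most $k$. The automaton $\mathcal{M}(G)$ with respect to a PMCFG $G=(N,\Sigma,I,R)$. Let $\bar R=\{\langle r,i,j\rangle : r=A\to[u_1,\dots,u_s](A_1,\dots,A_\ell)\in R, i\in[s], j\in\{0,\dots,|u_i|\}\}$ and $\Box$ a fresh symbol. Stack alphabet $\Gamma=\{\Box\}\cup R\cup\bar R$; states $Q=\{q,q_+,q_- : q\in\bar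 R\cup\{\Box\}\}$ (with $q_+,q_-$ fresh copies); initial state $\Box$; final states $\{\Box\}$. The transition set is the smallest set containing: (i) for every $r=S\to[u](A_1,\dots,A_\ell)\in R$ with $S\in I$: $(\Box,\varepsilon,\text{all},\mathrm{push}_1(\Box),\langle r,1,0\rangle)$, $(\langle r,1,|u|\rangle,\varepsilon,\mathrm{equals}(\Box),\mathrm{set}(r),\Box_-)$, and $(\Box_-,\varepsilon,\text{all},\mathrm{down},\Box)$; (ii) for every $r=A\to[u_1,\dots,u_s](A_1,\dots,A_\ell)\in R$, $i\in[s]$, $j\in[|u_i|]$ such that the $j$-th symbol of $u_i$ is $\sigma\in\Sigma$: $(\langle r,i,j-1\rangle,\sigma,\text{all},\mathrm{id},\langle r,i,j\rangle)$; (iii) for every $r=A\to[u_1,\dots,u_s](A_1,\dots,A_\ell)\in R$, $i\in[s]$, $j\in[|u_i|]$, $\kappa\in[\ell]$, $r'=A_\kappa\to[v_1,\dots,v_{s'}](B_1,\dots,B_{\ell'})\in R$, $m\in[s']$ such that the $j$-th symbol of $u_i$ is $x_\kappa^m$, writing $q=\langle r,i,j\rangle$: $(\langle r,i,j-1\rangle,\varepsilon,\text{all},\mathrm{push}_\kappa(q),\langle r',m,0\rangle)$, $(\langle r,i,j-1\rangle,\varepsilon,\text{all},\mathrm{up}_\kappa,q_+)$, $(q_+,\varepsilon,\mathrm{equals}(r'),\mathrm{set}(q),\langle r',m,0\rangle)$, $(\langle r',m,|v_m|\rangle,\varepsilon,\mathrm{equals}(q),\mathrm{set}(r'),q_-)$,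 and $(q_-,\varepsilon,\text{all},\mathrm{down},q)$. *)

From Stdlib Require List.
From mathcomp Require Import all_boot.
Set Implicit Arguments.
Unset Strict Implicit.
Unset Printing Implicit Defensive.

(* Symbols of the strings u_i: a terminal, or a variable x_i^j
   (Var i j, 1-based indices i, j as in the paper). *)
Inductive sym (Sigma : Type) := Term of Sigma | Var of nat & nat.
Arguments Var {Sigma}.

(* A rule A -> [u_1,...,u_s](A_1,...,A_l). *)
Record rule (N : Type) (Sigma : Type) := Rule {
  lhs  : N;
  rfun : seq (seq (sym Sigma));
  rhs  : seq N
}.

Record pmcfg := PMCFG {
  nt      : eqType;
  term    : Type;
  sort    : nt -> nat;
  initial : nt -> bool;
  rules   : seq (rule nt term)
}.
Arguments sort : clear implicits.
Arguments initial : clear implicits.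
Arguments rules : clear implicits.

Definition occurs (Sigma : Type) (x : sym Sigma) (f : seq (seq (sym Sigma))) :=
  exists u, List.In u f /\ List.In x u.

(* r is a rule of G typed by a composition function of sort
   (sort A_1 ... sort A_l, sort A) *)
Definition wf_rule (G : pmcfg) (r : rule (nt G) (term G)) : Prop :=
  size (rfun r) = sort G (lhs r) /\
  forall i j, occurs (Var i j) (rfun r) ->
    (1 <= i <= size (rhs r)) /\
    (1 <= j <= sort G (nth (lhs r) (rhs r) i.-1)).

Definition wf_pmcfg (G : pmcfg) : Prop :=
  (exists l : seq (nt G), forall A, A \in l) /\
  (exists l : seq (term G), forall a, List.In a l) /\
  (forall A, 0 < sort G A) /\
  (forall A, initial G A -> sort G A = 1) /\
  (forall r, List.In r (rules G) -> wf_rule r).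

Definition is_var_ij (Sigma : Type) (i j : nat) (x : sym Sigma) : bool :=
  if x is Var i' j' then (i' == i) && (j' == j) else false.

Definition linear_rule (N Sigma : Type) (r : rule N Sigma) : Prop :=
  forall i j, count (is_var_ij i j) (flatten (rfun r)) <= 1.

Definition fanout (N Sigma : Type) (r : rule N Sigma) : nat := size (rfun r).

Definition is_kMCFG (G : pmcfg) (k : nat) : Prop :=
  forall r, List.In r (rules G) -> linear_rule r /\ fanout r <= k.

Inductive label (Gamma : Type) := At | Lab of Gamma.
Arguments At {Gamma}.

(* Positions are words over N_+ (lists of nats); rho n = rcons rho n. *)
Record tstack (Gamma : Type) := TS {
  xi  : seq nat -> option (label Gamma);
  ptr : seq nat
}.

Definition init_ts (Gamma : Type) : tstack Gamma :=
  TS (fun a : seq nat => if a == [::] then Some At else None) [::].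

Inductive tpred (Gamma : Type) := PAll | PBottom | PEquals of Gamma.
Arguments PAll {Gamma}.
Arguments PBottom {Gamma}.

Definition holds (Gamma : Type) (p : tpred Gamma) (c : tstack Gamma) : Prop :=
  match p with
  | PAll => True
  | PBottom => ptr c = [::]
  | PEquals g => xi c (ptr c) = Some (Lab g)
  end.

Inductive instr (Gamma : Type) :=
  IId | IPush of nat & Gamma | IUp of nat | IDown | ISet of Gamma.
Arguments IId {Gamma}.
Arguments IUp {Gamma}.
Arguments IDown {Gamma}.

Definition upd (Gamma : Type) (f : seq nat -> option (label Gamma))
  (a : seq nat) (v : label Gamma) : seq nat -> option (label Gamma) :=
  fun b => if b == a then Some v else f b.

Definition apply_instr (Gamma : Type) (f : instr Gamma) (c : tstack Gamma)
  : option (tstack Gamma) :=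
  match f with
  | IId => Some c
  | IPush n g =>
      if xi c (rcons (ptr c) n) is None
      then Some (TS (upd (xi c) (rcons (ptr c) n) (Lab g)) (rcons (ptr c) n))
      else None
  | IUp n =>
      if xi c (rcons (ptr c) n) is Some _
      then Some (TS (xi c) (rcons (ptr c) n))
      else None
  | IDown =>
      if ptr c is x :: s then Some (TS (xi c) (belast x s)) else None
  | ISet g =>
      if ptr c is [::] then None
      else Some (TS (upd (xi c) (ptr c) (Lab g)) (ptr c))
  end.

Definition is_push_or_up (Gamma : Type) (f : instr Gamma) : bool :=
  match f with IPush _ _ | IUp _ => true | _ => false end.

Record tsa := TSA {
  st    : Type;
  inp   : Type;
  gam   : Type;
  q0    : st;
  final : st -> Prop;
  trans : seq (st * option inp * tpred gam * instr gam * st)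
}.
Arguments q0 : clear implicits.
Arguments final : clear implicits.
Arguments trans : clear implicits.

Definition transition (M : tsa) :=
  (st M * option (inp M) * tpred (gam M) * instr (gam M) * st M)%type.

Definition conf (M : tsa) := (st M * tstack (gam M) * seq (inp M))%type.

Definition t_instr (M : tsa) (t : transition M) : instr (gam M) :=
  let '(_, _, _, f, _) := t in f.

Definition cons_opt (A : Type) (o : option A) (w : seq A) : seq A :=
  if o is Some a then a :: w else w.

Definition step (M : tsa) (t : transition M) (c c' : conf M) : Prop :=
  let '(q, om, p, f, q') := t in
  let '(q1, ts, w) := c in
  let '(q2, ts', w') := c' in
  q1 = q /\ q2 = q' /\ w = cons_opt om w' /\ holds p ts /\
  apply_instr f ts = Some ts'.

(* a run from c: a sequence of (transition, configuration reached) *)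
Fixpoint is_run (M : tsa) (c : conf M) (l : seq (transition M * conf M)) : Prop :=
  match l with
  | [::] => True
  | (t, c') :: l' => List.In t (trans M) /\ step t c c' /\ is_run c' l'
  end.

Definition init_conf (M : tsa) (w : seq (inp M)) : conf M :=
  (q0 M, init_ts (gam M), w).

Definition valid_run (M : tsa) (w : seq (inp M))
  (l : seq (transition M * conf M)) : Prop :=
  is_run (init_conf w) l /\
  let '(q, _, w') := last (init_conf w) (map snd l) in
  final M q /\ w' = [::].

Definition conf_ptr (M : tsa) (c : conf M) : seq nat :=
  let '(_, ts, _) := c in ptr ts.

Definition k_restricted (M : tsa) (k : nat) : Prop :=
  forall (w : seq (inp M)) (l : seq (transition M * conf M)),
    valid_run w l ->
    forall rho : seq nat,
      count (fun tc : transition M * conf M =>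
               is_push_or_up (t_instr tc.1) && (conf_ptr tc.2 == rho)) l <= k.

Section MG.
Variable G : pmcfg.
Local Notation N := (nt G).
Local Notation Sigma := (term G).
Local Notation R := (rule N Sigma).

(* Gamma = {Box} u R u Rbar, with Rbar elements <r,i,j> *)
Inductive mgam := GBox | GRule of R | GBar of R & nat & nat.

(* states q, q_+, q_- for q in Rbar u {Box} *)
Inductive mst :=
  SBox | SBoxP | SBoxM
| SBar of R & nat & nat | SBarP of R & nat & nat | SBarM of R & nat & nat.

Definition mtrans := (mst * option Sigma * tpred mgam * instr mgam * mst)%type.

Definition comp (r : R) (i : nat) : seq (sym Sigma) := nth [::] (rfun r) i.-1.

Definition trans_i (r : R) : seq mtrans :=
  if initial G (lhs r) then
    let u := comp r 1 in
    [:: (SBox, None, PAll, IPush 1 GBox, SBar r 1 0);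
        (SBar r 1 (size u), None, PEquals GBox, ISet (GRule r), SBoxM);
        (SBoxM, None, PAll, IDown, SBox)]
  else [::].

Definition trans_ij (r : R) (i j : nat) : seq mtrans :=
  match nth (Var 0 0) (comp r i) j.-1 with
  | Term a => [:: (SBar r i j.-1, Some a, PAll, IId, SBar r i j)]
  | Var kap m =>
      if (0 < kap) && (kap <= size (rhs r)) then
        flatten [seq
          (if (lhs r' == nth (lhs r) (rhs r) kap.-1)
              && (0 < m) && (m <= size (rfun r')) then
             let q := GBar r i j in
             [:: (SBar r i j.-1, None, PAll, IPush kap q, SBar r' m 0);
                 (SBar r i j.-1, None, PAll, IUp kap, SBarP r i j);
                 (SBarP r i j, None, PEquals (GRule r'), ISet q, SBar r' m 0);
                 (SBar r' m (size (comp r' m)), None, PEquals q, ISet (GRule r'),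
                    SBarM r i j);
                 (SBarM r i j, None, PAll, IDown, SBar r i j)]
           else [::])
        | r' <- rules G]
      else [::]
  end.

Definition trans_r (r : R) : seq mtrans :=
  trans_i r ++
  flatten [seq flatten [seq trans_ij r i j | j <- iota 1 (size (comp r i))]
          | i <- iota 1 (size (rfun r))].

Definition M_trans : seq mtrans := flatten [seq trans_r r | r <- rules G].

Definition M_of : tsa :=
  @TSA mst Sigma mgam SBox (fun q => q = SBox) M_trans.

End MG.

From Pilot Require Import Defs.
From mathcomp Require Import all_boot zify.
Set Implicit Arguments.
Unset Strict Implicit.
Unset Printing Implicit Defensive.

(* A push or up that moves the pointer to a position rho of depth at least 2
   is made while the parent node, expanded with a rule r, processes an
   occurrence ⟨r,i,j⟩ of a variable x_kap^m (kap the last letter of rho); it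
   starts component m of the child at rho.  The rule at the parent is fixed
   once chosen, and each occurrence is processed at most once: a component is
   produced left to right, and it is requested only once, because the
   occurrence requesting it is itself processed only once.  By linearity,
   distinct occurrences of variables x_kap^_ carry distinct m, and m is bounded
   by the fan-out, hence by k.  At depth at most 1 only the initial push_1(□)
   moves the pointer.  All of this is maintained as an invariant along runs,
   relating the tree stack to the call structure. *)

Lemma InP (T : eqType) (x : T) (s : seq T) : reflect (List.In x s) (x \in s).
Proof.
elim: s => [|y s IH] /=; first by constructor.
rewrite in_cons; apply: (iffP orP) => [[/eqP ->|/IH]|[->|/IH]]; by [left|right|rewrite eqxx].
Qed.

Lemma In_cat {T : Type} {x : T} {s1 s2 : seq T} :
  List.In x (s1 ++ s2) <-> List.In x s1 \/ List.In x s2.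
Proof. by elim: s1 => [|y s IH] /=; [tauto|rewrite IH; tauto]. Qed.

Lemma In_flatten {T : Type} {x : T} {ss : seq (seq T)} :
  List.In x (flatten ss) -> exists2 s, List.In s ss & List.In x s.
Proof.
elim: ss => [|s ss IH] //= /In_cat [|/IH [s' ? ?]]; [exists s|exists s']; tauto.
Qed.

Lemma In_map {T U : Type} {f : T -> U} {y : U} {s : seq T} :
  List.In y (map f s) -> exists2 x, List.In x s & y = f x.
Proof. by elim: s => [|x s IH] //= [<-|/IH [x' ? ->]]; [exists x|exists x']; tauto. Qed.

Lemma In_filter {T : Type} {P : pred T} {x : T} {s : seq T} :
  List.In x (filter P s) -> List.In x s /\ P x.
Proof. by elim: s => [|y s IH] //=; case: ifP => Py /= => [[<-|/IH]|/IH]; tauto. Qed.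

Lemma uniq_map_transfer (T : Type) (A B : eqType) (f : T -> A) (g : T -> B) s :
  (forall x y, List.In x s -> List.In y s -> f x = f y -> g x = g y) ->
  uniq (map g s) -> uniq (map f s).
Proof.
elim: s => [|x s IH] //= Hfg /andP[gx_notin Us].
have Hfg' : forall y z, List.In y s -> List.In z s -> f y = f z -> g y = g z.
  by move=> y z Hy Hz; apply: Hfg; right.
rewrite IH // andbT; apply: contra gx_notin => /InP Hin; have [y Hy Efy] := In_map Hin.
have -> : g x = g y by apply: Hfg; [left|right|].
exact/InP/List.in_map.
Qed.

Lemma count_rcons (T : Type) (P : pred T) s x : count P (rcons s x) = count P s + P x.
Proof. by rewrite -cats1 count_cat /= addn0. Qed.

Lemma count_le1_nth_inj (T : Type) (x0 : T) (P : pred T) s a b :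
  count P s <= 1 -> a < size s -> b < size s ->
  P (nth x0 s a) -> P (nth x0 s b) -> a = b.
Proof.
have has_nth c t : c < size t -> P (nth x0 t c) -> 0 < count P t.
  by move=> Hc Pc; rewrite -has_count; apply/(has_nthP x0); exists c.
elim: s a b => [|x s IH] [|a] [|b] //= Hcnt Ha Hb Pa Pb.
- by move: Hcnt; rewrite Pa add1n ltnS leqNgt (has_nth b).
- by move: Hcnt; rewrite Pb add1n ltnS leqNgt (has_nth a).
- by congr S; apply: IH => //; apply: leq_trans Hcnt; apply: leq_addl.
Qed.

Lemma linear_occ_inj (N Sigma : Type) (r : rule N Sigma) i1 j1 i2 j2 a m :
  linear_rule r ->
  j1 < size (nth [::] (rfun r) i1) -> j2 < size (nth [::] (rfun r) i2) ->
  nth (Var 0 0) (nth [::] (rfun r) i1) j1 = Var a m ->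
  nth (Var 0 0) (nth [::] (rfun r) i2) j2 = Var a m ->
  i1 = i2 /\ j1 = j2.
Proof.
move=> lin_r Hj1 Hj2 E1 E2; set sh := shape (rfun r).
have Esh i : nth 0 sh i = size (nth [::] (rfun r) i).
  rewrite /sh /shape; case: (ltnP i (size (rfun r))) => Hi; first by rewrite (nth_map [::]).
  by rewrite !nth_default ?size_map.
have flat_nth i j : j < size (nth [::] (rfun r) i) ->
    nth (Var 0 0) (flatten (rfun r)) (flatten_index sh i j) =
    nth (Var 0 0) (nth [::] (rfun r) i) j.
  by rewrite -Esh => Hj; rewrite nth_flatten flatten_indexKl // flatten_indexKr.
have Hflat : flatten_index sh i1 j1 = flatten_index sh i2 j2.
  apply: (count_le1_nth_inj (x0 := Var 0 0) (lin_r a m)).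
  - by rewrite size_flatten flatten_indexP ?Esh.
  - by rewrite size_flatten flatten_indexP ?Esh.
  - by rewrite flat_nth // E1 /= !eqxx.
  - by rewrite flat_nth // E2 /= !eqxx.
rewrite -Esh in Hj1; rewrite -Esh in Hj2.
split.
  by rewrite -(flatten_indexKl Hj1) Hflat flatten_indexKl.
by rewrite -(flatten_indexKr Hj1) Hflat flatten_indexKr.
Qed.

Definition parent (s : seq nat) : seq nat :=
  if s is x :: s' then belast x s' else [::].

Lemma parent_rcons p a : parent (rcons p a) = p.
Proof. by case: p => [|x p] //=; rewrite belast_rcons. Qed.

Lemma rcons_parent (p : seq nat) : p != [::] -> p = rcons (parent p) (last 0 p).
Proof. by case: p => [|x s] //= _; rewrite -lastI. Qed.

Lemma rcons_neq0 (p : seq nat) a : rcons p a != [::].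
Proof. by case: p. Qed.

Lemma prefix_rconsE (s p : seq nat) a :
  prefix s (rcons p a) = (s == rcons p a) || prefix s p.
Proof.
rewrite !prefixE -cats1; case: (leqP (size s) (size p)) => Hs.
  rewrite takel_cat // orb_idl // => /eqP Es.
  by move: Hs; rewrite Es size_cat addn1 ltnn.
rewrite !take_oversize ?size_cat ?addn1 ?(ltnW Hs) //.
by rewrite [s == _]eq_sym orb_idr // => /eqP Ep; move: Hs; rewrite Ep ltnn.
Qed.

Lemma prefix_size_inj (s s' p : seq nat) :
  prefix s p -> prefix s' p -> size s = size s' -> s = s'.
Proof. by rewrite !prefixE => /eqP E /eqP E' Es; rewrite -E -E' Es. Qed.

Lemma rcons_prefix (s p : seq nat) a : prefix (rcons s a) p -> prefix s p.
Proof. by rewrite -cats1; apply: catl_prefix. Qed.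

Lemma apply_setP {Gamma : Type} {g : Gamma} {ts ts1 : tstack Gamma} :
  apply_instr (ISet g) ts = Some ts1 ->
  ptr ts != [::] /\ ts1 = TS (upd (xi ts) (ptr ts) (Lab g)) (ptr ts).
Proof. by rewrite /apply_instr; case E: (ptr ts) => [|x s] //= [<-]; rewrite -E. Qed.

Lemma apply_pushP {Gamma : Type} {n : nat} {g : Gamma} {ts ts1 : tstack Gamma} :
  apply_instr (IPush n g) ts = Some ts1 ->
  xi ts (rcons (ptr ts) n) = None /\
  ts1 = TS (upd (xi ts) (rcons (ptr ts) n) (Lab g)) (rcons (ptr ts) n).
Proof. by rewrite /apply_instr; case: (xi ts (rcons (ptr ts) n)) => //= [[<-]]. Qed.

Lemma apply_upP {Gamma : Type} {n : nat} {ts ts1 : tstack Gamma} :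
  apply_instr (IUp n) ts = Some ts1 ->
  xi ts (rcons (ptr ts) n) <> None /\ ts1 = TS (xi ts) (rcons (ptr ts) n).
Proof. by rewrite /apply_instr; case: (xi ts (rcons (ptr ts) n)) => //= ? [<-]. Qed.

Lemma apply_downP {Gamma : Type} {ts ts1 : tstack Gamma} :
  apply_instr IDown ts = Some ts1 ->
  ptr ts != [::] /\ ts1 = TS (xi ts) (parent (ptr ts)).
Proof. by rewrite /apply_instr; case: (ptr ts) => [|x s] //= [<-]. Qed.

Lemma upd_neq (Gamma : Type) (f : seq nat -> option (label Gamma)) a v b :
  b != a -> upd f a v b = f b.
Proof. by rewrite /upd => /negbTE ->. Qed.

Lemma upd_same (Gamma : Type) (f : seq nat -> option (label Gamma)) a v : upd f a v a = Some v.
Proof. by rewrite /upd eqxx. Qed.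

Lemma upd_alloc (Gamma : Type) (f : seq nat -> option (label Gamma)) a v b :
  f b <> None -> upd f a v b <> None.
Proof. by rewrite /upd; case: eqP. Qed.

Section Restricted.

Variables (G : pmcfg) (k : nat).
Hypothesis kG : is_kMCFG G k.

Local Notation R := (rule (nt G) (term G)).
Local Notation state := (mst G).
Local Notation tstack := (tstack (mgam G)).
Local Notation M := (M_of G).
Local Notation item := (transition M * conf M)%type.

Definition occ (r : R) i j := nth (Var 0 0) (Defs.comp r i) j.-1.

Definition var_index (r : R) i j := if occ r i j is Var _ m then m else 0.

Definition var_occ (r : R) i j kap m : Prop :=
  [/\ List.In r (rules G), 0 < i <= size (rfun r), 0 < j <= size (Defs.comp r i),
      occ r i j = Var kap m & 0 < m <= k].

Lemma var_index_occ r i j kap m : occ r i j = Var kap m -> var_index r i j = m.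
Proof. by rewrite /var_index => ->. Qed.

Lemma var_occ_inj r i1 j1 i2 j2 kap m :
  var_occ r i1 j1 kap m -> var_occ r i2 j2 kap m -> i1 = i2 /\ j1 = j2.
Proof.
move=> [Hr /andP[i1_gt0 _] /andP[j1_gt0 Hj1] E1 _] [_ /andP[i2_gt0 _] /andP[j2_gt0 Hj2] E2 _].
rewrite -(prednK j1_gt0) in Hj1; rewrite -(prednK j2_gt0) in Hj2.
have [Ei Ej] := linear_occ_inj (proj1 (kG Hr)) Hj1 Hj2 E1 E2.
by rewrite -(prednK i1_gt0) -(prednK j1_gt0) Ei Ej !prednK.
Qed.

(** * Transitions of M(G) *)

Inductive mtrans_spec : mtrans G -> Prop :=
| TStart r : List.In r (rules G) ->
    mtrans_spec (SBox G, None, PAll, IPush 1 (GBox G), SBar r 1 0)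
| TFinish r : mtrans_spec (SBar r 1 (size (Defs.comp r 1)), None, PEquals (GBox G),
                           ISet (GRule r), SBoxM G)
| TFinishDown : mtrans_spec (SBoxM G, None, PAll, IDown, SBox G)
| TRead r i j a : mtrans_spec (SBar r i j.-1, Some a, PAll, IId, SBar r i j)
| TCall r i j kap m r' : var_occ r i j kap m ->
    mtrans_spec (SBar r i j.-1, None, PAll, IPush kap (GBar r i j), SBar r' m 0)
| TResumeUp r i j kap m : var_occ r i j kap m ->
    mtrans_spec (SBar r i j.-1, None, PAll, IUp kap, SBarP r i j)
| TResumeSet r i j kap m r' : occ r i j = Var kap m ->
    mtrans_spec (SBarP r i j, None, PEquals (GRule r'), ISet (GBar r i j), SBar r' m 0)
| TReturn r i j r' m : mtrans_spec (SBar r' m (size (Defs.comp r' m)), None,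
    PEquals (GBar r i j), ISet (GRule r'), SBarM r i j)
| TReturnDown r i j : mtrans_spec (SBarM r i j, None, PAll, IDown, SBar r i j).

Lemma trans_ij_spec r i j t :
  List.In r (rules G) -> 0 < i <= size (rfun r) -> 0 < j <= size (Defs.comp r i) ->
  List.In t (trans_ij r i j) -> mtrans_spec t.
Proof.
rewrite /trans_ij => Hr Hi Hj.
case E: (nth (Var 0 0) (Defs.comp r i) j.-1) => [a|kap m]; first by case=> [<-|[]]; exact: TRead.
case: ifP => // _ /In_flatten[? /In_map[r' Hr' ->]].
case: ifP => // /andP[/andP[_ m_gt0] Hm].
have Hocc : var_occ r i j kap m.
  by split=> //; rewrite m_gt0; apply: leq_trans Hm (proj2 (kG Hr')).
case=> [<-|[<-|[<-|[<-|[<-|[]]]]]].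
- exact: TCall Hocc.
- exact: TResumeUp Hocc.
- exact: TResumeSet E.
- exact: TReturn.
- exact: TReturnDown.
Qed.

Lemma M_transP t : List.In t (M_trans G) -> mtrans_spec t.
Proof.
move=> /In_flatten[? /In_map[r Hr ->] /In_cat[]].
  rewrite /trans_i; case: ifP => // _.
  by case=> [<-|[<-|[<-|[]]]]; [exact: TStart|exact: TFinish|exact: TFinishDown].
move=> /In_flatten[? /In_map[i /InP Hi ->] /In_flatten[? /In_map[j /InP Hj ->]]].
by apply: trans_ij_spec; rewrite // -add1n -mem_iota.
Qed.

(** * The run invariant *)

(* In the intermediate states q_+, q_- and □_- the label at the pointer is
   pending; [eff_label] reads it as the caller's label ⟨r,i,j⟩ (resp. □) that
   it carries while the callee runs. *)
Definition eff_label (q : state) (ts : tstack) (s : seq nat) :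
    option (label (mgam G)) :=
  if s == ptr ts then
    match q with
    | SBarP r i j | SBarM r i j => Some (Lab (GBar r i j))
    | SBoxM => Some (Lab (GBox G))
    | _ => xi ts s
    end
  else xi ts s.

Definition call_label (o : option (label (mgam G))) : bool :=
  if o is Some (Lab (GBox | GBar _ _ _)) then true else false.

(* A push or up to the position [vpos], of depth at least 2, made while its
   parent processes the occurrence ⟨vrule, vcomp, vsym⟩ of a variable. *)
Record visit := Visit { vpos : seq nat; vrule : R; vcomp : nat; vsym : nat }.

Definition visit_of (it : item) : option visit :=
  let '((_, _, _, f, q'), (_, ts', _)) := it in
  match f, q' with
  | IPush _ (GBar r i j), _ | IUp _, SBarP r i j => Some (Visit (ptr ts') r i j)
  | _, _ => None
  end.

Definition visits (h : seq item) : seq visit := pmap visit_of h.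

(* Component [i] of the node at [pi] is being produced and has progressed to
   symbol [p]; in a state q_+ the component requested by the pending call is
   about to start at [p = 0]. *)
Definition computing (q : state) (ts : tstack) (pi : seq nat) (i p : nat) :=
  [\/ ptr ts = pi /\ exists r, q = SBar r i p,
      [/\ ptr ts = pi, p = 0 & exists r i' j', q = SBarP r i' j' /\ i = var_index r i' j']
    | exists kap r, eff_label q ts (rcons pi kap) = Some (Lab (GBar r i p))].

Definition node_rule (q : state) (ts : tstack) (pi : seq nat) (r : R) :=
  [\/ ptr ts = pi /\ exists i p, q = SBar r i p,
      exists kap i j, eff_label q ts (rcons pi kap) = Some (Lab (GBar r i j))
    | xi ts pi = Some (Lab (GRule r))].

Definition requested (V : seq visit) (pi : seq nat) (m : nat) :=
  size pi <= 1 \/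
  exists2 e, List.In e V & vpos e = pi /\ var_index (vrule e) (vcomp e) (vsym e) = m.

Definition state_ok (q : state) (ts : tstack) : Prop :=
  match q with
  | SBox => ptr ts = [::]
  | SBoxP => False
  | SBoxM => size (ptr ts) = 1 /\ exists r, xi ts (ptr ts) = Some (Lab (GRule r))
  | SBar _ _ _ => ptr ts != [::]
  | SBarP _ _ _ => 2 <= size (ptr ts)
  | SBarM _ _ _ => 2 <= size (ptr ts) /\ exists r, xi ts (ptr ts) = Some (Lab (GRule r))
  end.

Definition move_to (t : seq nat) (it : item) : bool :=
  is_push_or_up (t_instr it.1) && (conf_ptr it.2 == t).

Definition root_move (it : item) : bool :=
  is_push_or_up (t_instr it.1) && (size (conf_ptr it.2) <= 1).

Record Inv (h : seq item) (q : state) (ts : tstack) : Prop := {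
  inv_root : xi ts [::] = Some At;
  inv_calls : forall s, s != [::] -> call_label (eff_label q ts s) = prefix s (ptr ts);
  inv_box_depth : forall s, eff_label q ts s = Some (Lab (GBox G)) -> size s = 1;
  inv_bar_depth : forall s r i j, eff_label q ts s = Some (Lab (GBar r i j)) -> 2 <= size s;
  inv_state : state_ok q ts;
  inv_root_moves : count root_move h = 0 \/
                   [/\ count root_move h = 1, xi ts [:: 1] <> None & 0 < k];
  inv_moves : forall t, 2 <= size t ->
                count (move_to t) h = count (fun e => vpos e == t) (visits h);
  inv_visit_alloc : forall e, List.In e (visits h) -> xi ts (parent (vpos e)) <> None;
  inv_visit_occ : forall e, List.In e (visits h) ->
                    var_occ (vrule e) (vcomp e) (vsym e) (last 0 (vpos e))
                            (var_index (vrule e) (vcomp e) (vsym e));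
  inv_visit_uniq : uniq [seq (vpos e, vcomp e, vsym e) | e <- visits h];
  inv_visit_rule : forall e, List.In e (visits h) ->
                     node_rule q ts (parent (vpos e)) (vrule e);
  inv_visit_past : forall e p, List.In e (visits h) ->
                     computing q ts (parent (vpos e)) (vcomp e) p -> vsym e <= p;
  inv_visit_requested : forall e, List.In e (visits h) ->
                          requested (visits h) (parent (vpos e)) (vcomp e);
  inv_computing_requested : forall pi i p, computing q ts pi i p -> requested (visits h) pi i
}.

Lemma eff_label_off q ts s : s != ptr ts -> eff_label q ts s = xi ts s.
Proof. by rewrite /eff_label => /negbTE ->. Qed.

Lemma eff_label_SBar r i j ts s : eff_label (SBar r i j) ts s = xi ts s.
Proof. by rewrite /eff_label; case: ifP. Qed.

Lemma eff_label_SBox ts s : eff_label (SBox G) ts s = xi ts s.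
Proof. by rewrite /eff_label; case: ifP. Qed.

Section Invariant.

Variables (h : seq item) (q : state) (ts : tstack).
Hypothesis I : Inv h q ts.

Lemma call_prefix s kap r i j :
  eff_label q ts (rcons s kap) = Some (Lab (GBar r i j)) -> prefix (rcons s kap) (ptr ts).
Proof. by move=> E; rewrite -(inv_calls I (rcons_neq0 _ _)) E. Qed.

Lemma no_call_above_ptr kap r i j :
  eff_label q ts (rcons (ptr ts) kap) <> Some (Lab (GBar r i j)).
Proof. by move/call_prefix/size_prefix; rewrite size_rcons ltnn. Qed.

Lemma SBar_ptr_alloc r i j : q = SBar r i j -> xi ts (ptr ts) <> None.
Proof.
move=> Eq; have ptr_neq0 : ptr ts != [::] by have := inv_state I; rewrite Eq.
have := inv_calls I ptr_neq0; rewrite prefix_refl.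
by rewrite Eq eff_label_SBar; case: (xi ts (ptr ts)).
Qed.

Lemma node_rule_uniq pi r1 r2 : node_rule q ts pi r1 -> node_rule q ts pi r2 -> r1 = r2.
Proof.
have cur_no_call r i p kap r' i' j' : ptr ts = pi -> q = SBar r i p ->
    eff_label q ts (rcons pi kap) <> Some (Lab (GBar r' i' j')).
  by move=> Ep _; rewrite -Ep; apply: no_call_above_ptr.
have cur_no_rule r i p r' : ptr ts = pi -> q = SBar r i p ->
    xi ts pi <> Some (Lab (GRule r')).
  move=> <- Eq E; have ptr_neq0 : ptr ts != [::] by have := inv_state I; rewrite Eq.
  by have := inv_calls I ptr_neq0; rewrite prefix_refl Eq eff_label_SBar E.
have call_no_rule kap r i j r' : eff_label q ts (rcons pi kap) = Some (Lab (GBar r i j)) ->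
    xi ts pi <> Some (Lab (GRule r')).
  move=> E1 E2; have Hp := call_prefix E1.
  have [Epi|pi_neq0] := eqVneq pi [::]; first by rewrite Epi (inv_root I) in E2.
  have := inv_calls I pi_neq0; rewrite (rcons_prefix Hp).
  rewrite eff_label_off ?E2 //; apply/eqP => Ep.
  by have := size_prefix Hp; rewrite -Ep size_rcons ltnn.
case=> [[Ep [i [p Eq]]]|[kap [i [j E]]]|E];
case=> [[Ep' [i' [p' Eq']]]|[kap' [i' [j' E']]]|E'].
- by move: Eq'; rewrite Eq => [[]].
- by case: (cur_no_call _ _ _ _ _ _ _ Ep Eq E').
- by case: (cur_no_rule _ _ _ _ Ep Eq E').
- by case: (cur_no_call _ _ _ _ _ _ _ Ep' Eq' E).
- have Hs : rcons pi kap = rcons pi kap'.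
    by apply: (prefix_size_inj (call_prefix E) (call_prefix E')); rewrite !size_rcons.
  by move: E'; rewrite -Hs E => [[]].
- by case: (call_no_rule _ _ _ _ _ E E').
- by case: (cur_no_rule _ _ _ _ Ep' Eq' E).
- by case: (call_no_rule _ _ _ _ _ E' E).
- by move: E'; rewrite E => [[]].
Qed.

End Invariant.

(** * Preservation of the invariant *)

Lemma visits_rcons h it :
  visits (rcons h it) = visits h ++ (if visit_of it is Some e then [:: e] else [::]).
Proof. by rewrite /visits -cats1 pmap_cat /=; case: (visit_of it). Qed.

Lemma requested_cat V V' pi m : requested V pi m -> requested (V ++ V') pi m.
Proof. by case=> [?|[e He Epi]]; [left|right; exists e => //; apply/In_cat; left]. Qed.

Lemma inv_silent_step h q ts it q' ts' :
  Inv h q ts ->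
  xi ts' [::] = Some At ->
  (forall s, s != [::] -> call_label (eff_label q' ts' s) = prefix s (ptr ts')) ->
  (forall s, eff_label q' ts' s = Some (Lab (GBox G)) -> size s = 1) ->
  (forall s r i j, eff_label q' ts' s = Some (Lab (GBar r i j)) -> 2 <= size s) ->
  state_ok q' ts' ->
  (forall s, xi ts s <> None -> xi ts' s <> None) ->
  visit_of it = None -> is_push_or_up (t_instr it.1) = false ->
  (forall pi r, node_rule q ts pi r -> node_rule q' ts' pi r) ->
  (forall pi i p, computing q' ts' pi i p -> exists2 p0, p0 <= p & computing q ts pi i p0) ->
  Inv (rcons h it) q' ts'.
Proof.
move=> I root calls box_depth bar_depth st_ok alloc_mono no_visit no_move rule_mono comp_mono.
have Evis : visits (rcons h it) = visits h by rewrite visits_rcons no_visit cats0.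
split => //; rewrite ?Evis.
- rewrite count_rcons /root_move no_move addn0.
  by case: (inv_root_moves I) => [|[-> ? ?]]; [left|right; split; auto].
- by move=> t Ht; rewrite count_rcons /move_to no_move addn0; apply: inv_moves I t Ht.
- by move=> e He; apply/alloc_mono/(inv_visit_alloc I).
- exact: inv_visit_occ I.
- exact: inv_visit_uniq I.
- by move=> e He; apply/rule_mono/(inv_visit_rule I).
- move=> e p He /comp_mono[p0 Hp0 Hcomp].
  exact: leq_trans (inv_visit_past I He Hcomp) Hp0.
- exact: inv_visit_requested I.
- by move=> pi i p /comp_mono[p0 _ Hc]; apply: inv_computing_requested I _ _ _ Hc.
Qed.

Section VisitStep.

Variables (h : seq item) (ts ts' : tstack) (it : item) (q' : state).
Variables (r : R) (i j kap m : nat).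
Let p := ptr ts.
Let tau := rcons p kap.
Let e0 := Visit tau r i j.

Hypothesis I : Inv h (SBar r i j.-1) ts.
Hypothesis Hocc : var_occ r i j kap m.
Hypothesis ptr_step : ptr ts' = tau.
Hypothesis eff_step : forall s,
  eff_label q' ts' s = if s == tau then Some (Lab (GBar r i j)) else xi ts s.
Hypothesis alloc_mono : forall s, xi ts s <> None -> xi ts' s <> None.
Hypothesis st_ok : state_ok q' ts'.
Hypothesis it_visit : visit_of it = Some e0.
Hypothesis it_move : is_push_or_up (t_instr it.1).
Hypothesis it_ptr : conf_ptr it.2 = tau.
Hypothesis rule_mono : forall pi r0, node_rule (SBar r i j.-1) ts pi r0 -> node_rule q' ts' pi r0.
Hypothesis comp_step : forall pi i' p', computing q' ts' pi i' p' ->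
  [/\ pi = tau, p' = 0 & i' = m] \/
  exists kap' r2, eff_label q' ts' (rcons pi kap') = Some (Lab (GBar r2 i' p')).
Hypothesis fresh : forall e, List.In e (visits h) -> parent (vpos e) = tau -> vcomp e != m.

Let j_gt0 : 0 < j. Proof. by case: Hocc => _ _ /andP[]. Qed.

Let parent_tau : parent tau = p. Proof. exact: parent_rcons. Qed.

Let computing_here : computing (SBar r i j.-1) ts p i j.-1.
Proof. by apply: Or31; split=> //; exists r. Qed.

Let visits_step : visits (rcons h it) = visits h ++ [:: e0].
Proof. by rewrite visits_rcons it_visit. Qed.

Let In_visits_step e : List.In e (visits (rcons h it)) -> List.In e (visits h) \/ e = e0.
Proof. by rewrite visits_step => /In_cat[|[<-|[]]]; [left|right]. Qed.

Let visit_here_past e :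
  List.In e (visits h) -> parent (vpos e) = p -> vcomp e = i -> vsym e <= j.-1.
Proof. by move=> He Epar Ei; apply: (inv_visit_past I He); rewrite Epar Ei. Qed.

Lemma visit_step_uniq : uniq [seq (vpos e, vcomp e, vsym e) | e <- visits (rcons h it)].
Proof.
rewrite visits_step map_cat cat_uniq (inv_visit_uniq I) /= andbT orbF.
apply/negP => /InP/In_map[e He [Epos Ei Ej]].
have := visit_here_past He; rewrite -Epos parent_tau -Ei -Ej => /(_ erefl erefl).
by case: (j) j_gt0 => // j' _; rewrite ltnn.
Qed.

Lemma visit_step_past e p' : List.In e (visits (rcons h it)) ->
  computing q' ts' (parent (vpos e)) (vcomp e) p' -> vsym e <= p'.
Proof.
move=> He /comp_step[[Epar -> Ei]|[kap' [r2]]].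
  case: (In_visits_step He) => [He'|Ee]; first by move: (fresh He' Epar); rewrite Ei eqxx.
  by move: Epar; rewrite Ee /= parent_tau => /(congr1 size); rewrite /tau size_rcons; lia.
rewrite eff_step; case: eqP => [Etau [_ Ei Ep]|_ Eff].
  have Epar : parent (vpos e) = p by rewrite -parent_tau -Etau parent_rcons.
  rewrite -Ep; case: (In_visits_step He) => [He'|-> //].
  exact: leq_trans (visit_here_past He' Epar (esym Ei)) (leq_pred _).
case: (In_visits_step He) => [He'|Ee].
  by apply: (inv_visit_past I He'); apply: Or33; exists kap', r2; rewrite eff_label_SBar.
move: Eff; rewrite Ee /= parent_tau -(eff_label_SBar r i j.-1).
by move/(no_call_above_ptr I).
Qed.

Lemma visit_step_requested pi i' p' :
  computing q' ts' pi i' p' -> requested (visits (rcons h it)) pi i'.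
Proof.
rewrite visits_step => /comp_step[[-> _ ->]|[kap' [r2]]].
  right; exists e0; first by apply/In_cat; right; left.
  by split=> //; case: Hocc => _ _ _ /var_index_occ.
rewrite eff_step; case: eqP => [/rcons_inj[-> _] [_ <- _]|_ Eff].
  exact/requested_cat/(inv_computing_requested I computing_here).
apply/requested_cat/(inv_computing_requested I (p := p')).
by apply: Or33; exists kap', r2; rewrite eff_label_SBar.
Qed.

Lemma inv_visit_step : Inv (rcons h it) q' ts'.
Proof.
have tau_neq0 : tau != [::] by apply: rcons_neq0.
have size_tau : 2 <= size tau.
  by rewrite /tau size_rcons ltnS lt0n size_eq0; have := inv_state I.
split.
- have := eff_step [::]; rewrite eff_label_off ?ptr_step 1?eq_sym // (negbTE tau_neq0).
  by move=> ->; apply: inv_root I.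
- move=> s Hs; rewrite eff_step ptr_step prefix_rconsE.
  by case: eqP => [->|_] //=; rewrite -(eff_label_SBar r i j.-1); apply: inv_calls I s Hs.
- move=> s; rewrite eff_step; case: eqP => // _.
  by rewrite -(eff_label_SBar r i j.-1); apply: inv_box_depth I s.
- move=> s r2 i2 j2; rewrite eff_step; case: eqP => [->|_] // .
  by rewrite -(eff_label_SBar r i j.-1); apply: inv_bar_depth I s r2 i2 j2.
- exact: st_ok.
- rewrite count_rcons /root_move it_move it_ptr /= leqNgt size_tau addn0.
  case: (inv_root_moves I) => [|[-> ? ?]]; [left|right; split] => //; exact: alloc_mono.
- move=> t Ht; rewrite count_rcons /move_to it_move it_ptr visits_step count_cat.
  by rewrite (inv_moves I Ht) /= addn0 eq_sym.
- move=> e /In_visits_step[He|->]; first exact/alloc_mono/(inv_visit_alloc I).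
  by rewrite /= parent_tau; apply: alloc_mono (SBar_ptr_alloc I erefl).
- move=> e /In_visits_step[He|->]; first exact: inv_visit_occ I e He.
  by rewrite /= /tau last_rcons; case: Hocc => _ _ _ /var_index_occ ->.
- exact: visit_step_uniq.
- move=> e /In_visits_step[He|->]; first exact/rule_mono/(inv_visit_rule I).
  by rewrite /= parent_tau; apply: Or32; exists kap, i, j; rewrite eff_step eqxx.
- exact: visit_step_past.
- move=> e /In_visits_step[He|->]; rewrite visits_step.
    exact/requested_cat/(inv_visit_requested I).
  by rewrite /= parent_tau; apply/requested_cat/(inv_computing_requested I computing_here).
- exact: visit_step_requested.
Qed.

End VisitStep.

Lemma inv_set_step h q ts it q' ts1 g :
  Inv h q ts -> apply_instr (ISet g) ts = Some ts1 ->
  (forall s, eff_label q' ts1 s = eff_label q ts s) -> state_ok q' ts1 ->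
  visit_of it = None -> is_push_or_up (t_instr it.1) = false ->
  (forall pi r, node_rule q ts pi r -> node_rule q' ts1 pi r) ->
  (forall pi i p, computing q' ts1 pi i p -> exists2 p0, p0 <= p & computing q ts pi i p0) ->
  Inv (rcons h it) q' ts1.
Proof.
move=> I /apply_setP[ptr_neq0 ->] Eeff st_ok ? ? ? ?; apply: (inv_silent_step I) => //.
- by rewrite /= upd_neq ?(inv_root I) // eq_sym.
- by move=> s Hs; rewrite Eeff; apply: inv_calls I s Hs.
- by move=> s; rewrite Eeff; apply: inv_box_depth I s.
- by move=> s r i j; rewrite Eeff; apply: inv_bar_depth I s r i j.
- by move=> s; apply: upd_alloc.
Qed.

Lemma inv_finish h ts ts1 w1 r (q := SBar r 1 (size (Defs.comp r 1))) :
  Inv h q ts -> holds (PEquals (GBox G)) ts -> apply_instr (ISet (GRule r)) ts = Some ts1 ->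
  Inv (rcons h ((q, None, PEquals (GBox G), ISet (GRule r), SBoxM G), (SBoxM G, ts1, w1)))
      (SBoxM G) ts1.
Proof.
move=> I /= Hbox Hset; have [_ Ets1] := apply_setP Hset.
have Eeff s : eff_label (SBoxM G) ts1 s = eff_label q ts s.
  rewrite Ets1 eff_label_SBar /eff_label /=.
  by case: eqP => [->|/eqP Hs]; [rewrite Hbox|apply: upd_neq].
apply: (inv_set_step I Hset Eeff) => //.
- rewrite Ets1 /= upd_same; split; last by exists r.
  by apply: (inv_box_depth I); rewrite eff_label_SBar.
- move=> pi r0 [[<- [i0 [p0 [<- _ _]]]]|[kap [i0 [j0 E]]]|E].
  + by apply: Or33; rewrite Ets1 /= upd_same.
  + by apply: Or32; exists kap, i0, j0; rewrite Eeff.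
  + apply: Or33; rewrite Ets1 /= upd_neq //.
    by apply/eqP => Epi; move: E; rewrite Epi Hbox.
- move=> pi i p [[_ [? //]]|[_ _ [? [? [? [//]]]]]|[kap [r2 E]]].
  by exists p => //; apply: Or33; exists kap, r2; rewrite -Eeff.
Qed.

Lemma inv_resume_set h ts ts1 w1 r i j kap m r' (q := SBarP r i j) :
  Inv h q ts -> occ r i j = Var kap m ->
  holds (PEquals (GRule r')) ts -> apply_instr (ISet (GBar r i j)) ts = Some ts1 ->
  Inv (rcons h ((q, None, PEquals (GRule r'), ISet (GBar r i j), SBar r' m 0),
                (SBar r' m 0, ts1, w1))) (SBar r' m 0) ts1.
Proof.
move=> I Eocc /= Hrule Hset; have [ptr_neq0 Ets1] := apply_setP Hset.
have Eeff s : eff_label (SBar r' m 0) ts1 s = eff_label q ts s.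
  rewrite Ets1 eff_label_SBar /eff_label /=.
  by case: eqP => [->|/eqP Hs]; [rewrite upd_same|apply: upd_neq].
apply: (inv_set_step I Hset Eeff) => //; first by rewrite Ets1.
- move=> pi r0 [[_ [? [? //]]]|[kap' [i0 [j0 E]]]|E].
  + by apply: Or32; exists kap', i0, j0; rewrite Eeff.
  + have [Epi|Hpi] := eqVneq pi (ptr ts).
      move: E; rewrite Epi Hrule => [[<-]].
      by apply: Or31; split; [rewrite Ets1|exists m, 0].
    by apply: Or33; rewrite Ets1 /= upd_neq.
- move=> pi i' p' [[Ep [r2 [_ <- <-]]]|[_ _ [? [? [? [//]]]]]|[kap' [r2 E]]].
  + exists 0 => //; apply: Or32; split; rewrite -?Ep ?Ets1 //.
    by exists r, i, j; rewrite (var_index_occ Eocc).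
  + by exists p' => //; apply: Or33; exists kap', r2; rewrite -Eeff.
Qed.

Lemma inv_return h ts ts1 w1 r i j r' m (q := SBar r' m (size (Defs.comp r' m))) :
  Inv h q ts -> holds (PEquals (GBar r i j)) ts ->
  apply_instr (ISet (GRule r')) ts = Some ts1 ->
  Inv (rcons h ((q, None, PEquals (GBar r i j), ISet (GRule r'), SBarM r i j),
                (SBarM r i j, ts1, w1))) (SBarM r i j) ts1.
Proof.
move=> I /= Hbar Hset; have [_ Ets1] := apply_setP Hset.
have Eeff s : eff_label (SBarM r i j) ts1 s = eff_label q ts s.
  rewrite Ets1 eff_label_SBar /eff_label /=.
  by case: eqP => [->|/eqP Hs]; [rewrite Hbar|apply: upd_neq].
apply: (inv_set_step I Hset Eeff) => //.
- rewrite Ets1 /= upd_same; split; last by exists r'.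
  by apply: (inv_bar_depth (r := r) (i := i) (j := j) I); rewrite eff_label_SBar.
- move=> pi r0 [[<- [i0 [p0 [<- _ _]]]]|[kap [i0 [j0 E]]]|E].
  + by apply: Or33; rewrite Ets1 /= upd_same.
  + by apply: Or32; exists kap, i0, j0; rewrite Eeff.
  + apply: Or33; rewrite Ets1 /= upd_neq //.
    by apply/eqP => Epi; move: E; rewrite Epi Hbar.
- move=> pi i' p' [[_ [? //]]|[_ _ [? [? [? [//]]]]]|[kap [r2 E]]].
  by exists p' => //; apply: Or33; exists kap, r2; rewrite -Eeff.
Qed.

Lemma inv_read h ts w1 r i j a (q := SBar r i j.-1) :
  Inv h q ts ->
  Inv (rcons h ((q, Some a, PAll, IId, SBar r i j), (SBar r i j, ts, w1))) (SBar r i j) ts.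
Proof.
move=> I; have Eeff s : eff_label (SBar r i j) ts s = eff_label q ts s.
  by rewrite !eff_label_SBar.
apply: (inv_silent_step I) => //.
- exact: inv_root I.
- exact: inv_calls I.
- exact: inv_box_depth I.
- exact: inv_bar_depth I.
- exact: inv_state I.
- move=> pi r0 [[Ep [i0 [p0 [<- _ _]]]]|[kap [i0 [j0 E]]]|E].
  + by apply: Or31; split=> //; exists i, j.
  + by apply: Or32; exists kap, i0, j0; rewrite Eeff.
  + exact: Or33.
- move=> pi i' p' [[Ep [r2 [_ <- <-]]]|[_ _ [? [? [? [//]]]]]|[kap [r2 E]]].
  + by exists j.-1; [apply: leq_pred|apply: Or31; split=> //; exists r].
  + by exists p' => //; apply: Or33; exists kap, r2; rewrite -Eeff.
Qed.

Lemma inv_finish_down h ts ts1 w1 :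
  Inv h (SBoxM G) ts -> apply_instr IDown ts = Some ts1 ->
  Inv (rcons h ((SBoxM G, None, PAll, IDown, SBox G), (SBox G, ts1, w1))) (SBox G) ts1.
Proof.
move=> I /apply_downP[_ ->]; have [size_ptr [r0 Hrule]] := inv_state I.
set p := ptr ts in size_ptr Hrule *.
have parent_p : parent p = [::] by case: (p) size_ptr => [|x [|y s]].
have Eeff s : s != p -> eff_label (SBoxM G) ts s = xi ts s by apply: eff_label_off.
have no_call s : s != [::] -> ~~ call_label (xi ts s).
  move=> Hs; have [->|Hsp] := eqVneq s p; first by rewrite Hrule.
  rewrite -Eeff // (inv_calls I Hs); apply/negP => Hpre; move/eqP: Hsp; apply.
  apply: (prefix_size_inj Hpre (prefix_refl _)); rewrite size_ptr.
  by move: Hs (size_prefix Hpre); rewrite size_ptr; case: (s) => [|x [|y t]].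
have no_call_label s l : xi ts s = Some (Lab l) -> ~~ call_label (Some (Lab l)).
  move=> E; have [Es|Hs] := eqVneq s [::]; first by rewrite Es (inv_root I) in E.
  by rewrite -E no_call.
apply: (inv_silent_step I) => //.
- exact: inv_root I.
- move=> s Hs; rewrite eff_label_SBox /= parent_p prefixs0 (negbTE Hs).
  exact/negbTE/no_call.
- by move=> s; rewrite eff_label_SBox => /no_call_label.
- by move=> s r i j; rewrite eff_label_SBox => /no_call_label.
- move=> pi r [[_ [? [? //]]]|[kap [i0 [j0 E]]]|E]; last exact: Or33.
  apply: Or32; exists kap, i0, j0; rewrite eff_label_SBox -Eeff //.
  by apply/eqP => Es; move: E; rewrite Es /eff_label eqxx.
- move=> pi i p' [[_ [? //]]|[_ _ [? [? [? [//]]]]]|[kap [r2]]].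
  by rewrite eff_label_SBox => /no_call_label.
Qed.

Lemma inv_return_down h ts ts1 w1 r i j :
  Inv h (SBarM r i j) ts -> apply_instr IDown ts = Some ts1 ->
  Inv (rcons h ((SBarM r i j, None, PAll, IDown, SBar r i j), (SBar r i j, ts1, w1)))
      (SBar r i j) ts1.
Proof.
move=> I /apply_downP[ptr_neq0 ->]; have [size_ptr [r2 Hrule]] := inv_state I.
set p := ptr ts in ptr_neq0 size_ptr Hrule *; set p0 := parent p.
have Ep : p = rcons p0 (last 0 p) by apply: rcons_parent.
have Eeff s : s != p -> eff_label (SBarM r i j) ts s = xi ts s by apply: eff_label_off.
have Eeff_p : eff_label (SBarM r i j) ts p = Some (Lab (GBar r i j)) by rewrite /eff_label eqxx.
have not_p s l : xi ts s = Some (Lab l) -> call_label (Some (Lab l)) -> s != p.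
  by move=> E Hl; apply/eqP => Es; move: E Hl; rewrite Es Hrule => [[<-]].
apply: (inv_silent_step I) => //.
- exact: inv_root I.
- move=> s Hs; rewrite eff_label_SBar /=; have [->|Hsp] := eqVneq s p.
    rewrite Hrule; apply/esym/negbTE/negP => /size_prefix; rewrite {1}Ep size_rcons; lia.
  by rewrite -(Eeff s Hsp) (inv_calls I Hs) -/p {1}Ep prefix_rconsE -Ep (negbTE Hsp).
- move=> s; rewrite eff_label_SBar => E.
  by apply: (inv_box_depth I); rewrite Eeff ?(not_p _ _ E).
- move=> s r3 i3 j3; rewrite eff_label_SBar /= => E.
  by apply: (inv_bar_depth I); rewrite Eeff ?(not_p _ _ E) //; exact: E.
- by rewrite /= -/p0; apply/eqP => E0; move: size_ptr; rewrite Ep E0.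
- move=> pi r3 [[_ [? [? //]]]|[kap [i0 [j0 E]]]|E]; last exact: Or33.
  have [Es|Hs] := eqVneq (rcons pi kap) p.
    move: E; rewrite Es Eeff_p => [[<- _ _]]; apply: Or31; split; last by exists i, j.
    by rewrite /= -/p0 -(parent_rcons pi kap) Es.
  by apply: Or32; exists kap, i0, j0; rewrite eff_label_SBar -Eeff.
- move=> pi i' p' [[Ep' [r3 [_ <- <-]]]|[_ _ [? [? [? [//]]]]]|[kap [r3 E]]].
  + exists j => //; apply: Or33; exists (last 0 p), r.
    by rewrite /= -/p0 in Ep'; rewrite -Ep' -Ep.
  + exists p' => //; apply: Or33; exists kap, r3.
    by move: E; rewrite eff_label_SBar => E; rewrite Eeff ?(not_p _ _ E).
Qed.

Lemma inv_call h ts ts1 w1 r i j kap m r' (q := SBar r i j.-1) :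
  Inv h q ts -> var_occ r i j kap m -> apply_instr (IPush kap (GBar r i j)) ts = Some ts1 ->
  Inv (rcons h ((q, None, PAll, IPush kap (GBar r i j), SBar r' m 0), (SBar r' m 0, ts1, w1)))
      (SBar r' m 0) ts1.
Proof.
move=> I Hocc /apply_pushP[Hfree ->].
set tau := rcons (ptr ts) kap in Hfree *.
have off_tau s : xi ts s <> None -> s != tau by move=> Hs; apply/eqP => Es; rewrite Es in Hs.
apply: (inv_visit_step (m := m) I Hocc) => //.
- by move=> s; rewrite eff_label_SBar /= /upd; case: eqP.
- by move=> s; apply: upd_alloc.
- by rewrite /= rcons_neq0.
- move=> pi r0 [[Ep [i0 [p0 [<- _ _]]]]|[kap' [i0 [j0 E]]]|E].
  + by apply: Or32; exists kap, i, j; rewrite eff_label_SBar /= -Ep upd_same.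
  + have Ex : xi ts (rcons pi kap') = Some (Lab (GBar r0 i0 j0)).
      by rewrite -(eff_label_SBar r i j.-1).
    by apply: Or32; exists kap', i0, j0; rewrite eff_label_SBar /= upd_neq ?off_tau ?Ex.
  + by apply: Or33; rewrite /= upd_neq // off_tau // E.
- move=> pi i' p' [[Ep [r2 [_ <- <-]]]|[_ _ [? [? [? [//]]]]]|HA]; last by right.
  by left; rewrite -Ep.
- by move=> e /(inv_visit_alloc I) + Epar; rewrite Epar.
Qed.

(* By linearity x_kap^m occurs in [r] only at ⟨r,i,j⟩, which has not been
   processed yet; so component [m] of the kap-th child was never requested. *)
Lemma child_comp_unrequested h ts r i j kap m :
  Inv h (SBar r i j.-1) ts -> var_occ r i j kap m ->
  forall e, List.In e (visits h) -> vpos e = rcons (ptr ts) kap ->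
  var_index (vrule e) (vcomp e) (vsym e) != m.
Proof.
move=> I Hocc e He Epos; apply/eqP => Em.
have Erule : vrule e = r.
  apply: (node_rule_uniq I (inv_visit_rule I He)); rewrite Epos parent_rcons.
  by apply: Or31; split=> //; exists i, j.-1.
have Hocc' := inv_visit_occ I He.
rewrite Em Erule Epos last_rcons in Hocc'.
have [Ei Ej] := var_occ_inj Hocc' Hocc.
have here : computing (SBar r i j.-1) ts (ptr ts) i j.-1 by apply: Or31; split=> //; exists r.
have := inv_visit_past I He (p := j.-1); rewrite Epos parent_rcons Ei Ej => /(_ here).
by case: Hocc => _ _ /andP[]; case: (j) => // j' _ _ _; rewrite ltnn.
Qed.

Lemma inv_resume_up h ts ts1 w1 r i j kap m (q := SBar r i j.-1) :
  Inv h q ts -> var_occ r i j kap m -> apply_instr (IUp kap) ts = Some ts1 ->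
  Inv (rcons h ((q, None, PAll, IUp kap, SBarP r i j), (SBarP r i j, ts1, w1)))
      (SBarP r i j) ts1.
Proof.
move=> I Hocc /apply_upP[_ ->].
set tau := rcons (ptr ts) kap.
have size_tau : 2 <= size tau.
  by rewrite size_rcons ltnS lt0n size_eq0; have := inv_state I.
have tau_no_call : ~~ call_label (xi ts tau).
  rewrite -(eff_label_SBar r i j.-1) (inv_calls I (rcons_neq0 _ _)).
  by apply/negP => /size_prefix; rewrite size_rcons ltnn.
have Eeff s : eff_label (SBarP r i j) (TS (xi ts) tau) s =
              if s == tau then Some (Lab (GBar r i j)) else xi ts s.
  by rewrite /eff_label /=; case: ifP.
apply: (inv_visit_step (m := m) I Hocc) => //.
- move=> pi r0 [[Ep [i0 [p0 [<- _ _]]]]|[kap' [i0 [j0 E]]]|E]; last exact: Or33.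
  + by apply: Or32; exists kap, i, j; rewrite Eeff -Ep eqxx.
  + apply: Or32; exists kap', i0, j0; rewrite Eeff -(eff_label_SBar r i j.-1).
    case: eqP => // Es; by move: tau_no_call; rewrite -Es -(eff_label_SBar r i j.-1) E.
- move=> pi i' p' [[_ [? //]]|[Ep -> [r2 [i2 [j2 [[<- <- <-] ->]]]]]|HA]; last by right.
  by left; split=> //; case: Hocc => _ _ _ /var_index_occ.
- move=> e He Epar; apply/eqP => Ecomp.
  have := inv_visit_requested I He; rewrite Epar Ecomp.
  case=> [|[e' He' [Epos' Em]]]; first by rewrite leqNgt size_tau.
  by move: (child_comp_unrequested I Hocc He' Epos'); rewrite Em eqxx.
Qed.

Lemma SBox_no_call h ts s : Inv h (SBox G) ts -> s != [::] -> ~~ call_label (xi ts s).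
Proof.
by move=> I Hs; rewrite -(eff_label_SBox ts) (inv_calls I Hs) (inv_state I) prefixs0.
Qed.

Lemma SBox_no_call_label h ts s l :
  Inv h (SBox G) ts -> xi ts s = Some (Lab l) -> ~~ call_label (Some (Lab l)).
Proof.
move=> I E; have [Es|Hs] := eqVneq s [::]; first by rewrite Es (inv_root I) in E.
by rewrite -E (SBox_no_call I Hs).
Qed.

Lemma inv_start h ts ts1 w1 r :
  0 < k -> Inv h (SBox G) ts -> apply_instr (IPush 1 (GBox G)) ts = Some ts1 ->
  Inv (rcons h ((SBox G, None, PAll, IPush 1 (GBox G), SBar r 1 0), (SBar r 1 0, ts1, w1)))
      (SBar r 1 0) ts1.
Proof.
move=> k_gt0 I /apply_pushP[]; rewrite (inv_state I) /= => Hfree ->.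
set f := upd (xi ts) [:: 1] (Lab (GBox G)).
have f1 : f [:: 1] = Some (Lab (GBox G)) by apply: upd_same.
have fE s : s != [:: 1] -> f s = xi ts s by apply: upd_neq.
have no_call_label := SBox_no_call_label I.
have no_call_f s kap r0 i j :
    eff_label (SBar r 1 0) (TS f [:: 1]) (rcons s kap) <> Some (Lab (GBar r0 i j)).
  rewrite eff_label_SBar /=; have [->|Hs] := eqVneq (rcons s kap) [:: 1]; first by rewrite f1.
  by rewrite fE // => /no_call_label.
have Evis : visits (rcons h ((SBox G, None, PAll, IPush 1 (GBox G), SBar r 1 0),
    (SBar r 1 0, TS f [:: 1], w1))) = visits h by rewrite visits_rcons /= cats0.
have visit_parent e : List.In e (visits h) -> parent (vpos e) != [:: 1].
  by move=> /(inv_visit_alloc I); apply: contra_notN => /eqP ->.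
split; rewrite ?Evis //.
- by rewrite /= fE ?(inv_root I).
- move=> s Hs; rewrite eff_label_SBar [xi _]/=.
  have [->|Hs1] := eqVneq s [:: 1]; first by rewrite f1.
  by rewrite fE // prefixs1 (negbTE Hs) (negbTE Hs1) (negbTE (SBox_no_call I Hs)).
- move=> s; rewrite eff_label_SBar /=; have [->|Hs1] := eqVneq s [:: 1]; first by [].
  by rewrite fE // => /no_call_label.
- move=> s r0 i j; rewrite eff_label_SBar /=.
  have [->|Hs1] := eqVneq s [:: 1]; first by rewrite f1.
  by rewrite fE // => /no_call_label.
- rewrite count_rcons /root_move /= addn1.
  by case: (inv_root_moves I) => [->|[_ ? _]] //; right; rewrite f1.
- move=> t Ht; rewrite count_rcons /move_to /= (inv_moves I Ht).
  by case: eqP Ht => [<-|_ _]; rewrite ?addn0.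
- by move=> e He; apply/upd_alloc/(inv_visit_alloc I).
- exact: inv_visit_occ I.
- exact: inv_visit_uniq I.
- move=> e He; case: (inv_visit_rule I He) => [[_ [? [? //]]]|[kap [? [? E]]]|E].
    by move: E; rewrite eff_label_SBox => /no_call_label.
  by apply: Or33; rewrite /= fE // visit_parent.
- move=> e p He [[Ep _]|[_ _ [? [? [? [//]]]]]|[kap [r2 E]]].
    by move: (visit_parent e He); rewrite -Ep eqxx.
  by case: (no_call_f _ _ _ _ _ E).
- exact: inv_visit_requested I.
- move=> pi i p [[<- _]|[_ _ [? [? [? [//]]]]]|[kap [r2 E]]]; first by left.
  by case: (no_call_f _ _ _ _ _ E).
Qed.

(** * Counting moves *)

Lemma visits_at_le h q ts rho : Inv h q ts -> count (fun e => vpos e == rho) (visits h) <= k.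
Proof.
move=> I; rewrite -size_filter; set V := [seq e <- visits h | vpos e == rho].
pose m_of e := var_index (vrule e) (vcomp e) (vsym e).
have V_occ e : List.In e V -> [/\ List.In e (visits h), vpos e = rho &
    var_occ (vrule e) (vcomp e) (vsym e) (last 0 rho) (m_of e)].
  by move=> /In_filter[He /eqP Epos]; split=> //; rewrite -Epos; apply: inv_visit_occ I e He.
rewrite -(size_map m_of) -[k](size_iota 1); apply: uniq_leq_size.
  apply: (uniq_map_transfer (g := fun e => (vpos e, vcomp e, vsym e))); last first.
    by have := filter_uniq (fun x => x.1.1 == rho) (inv_visit_uniq I); rewrite filter_map.
  move=> e1 e2 /V_occ[He1 Epos1 Hocc1] /V_occ[He2 Epos2 Hocc2] Em.
  have Erule : vrule e1 = vrule e2.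
    apply: (node_rule_uniq I (inv_visit_rule I He1)).
    by rewrite Epos1 -Epos2; apply: inv_visit_rule I _ He2.
  rewrite Erule Em in Hocc1; have [-> ->] := var_occ_inj Hocc1 Hocc2.
  by rewrite Epos1 Epos2.
move=> _ /InP/In_map[e /V_occ[_ _ [_ _ _ _ Hm]] ->].
by rewrite mem_iota add1n ltnS.
Qed.

Lemma moves_le h q ts rho : Inv h q ts -> count (move_to rho) h <= k.
Proof.
move=> I; case: (leqP (size rho) 1) => size_rho; last first.
  by rewrite (inv_moves I size_rho); exact: (visits_at_le rho I).
apply: leq_trans (sub_count (a2 := root_move) _ h) _.
  by move=> it; rewrite /move_to /root_move => /andP[-> /eqP ->].
by case: (inv_root_moves I) => [->|[-> _]].
Qed.

Lemma inv_init : Inv [::] (SBox G) (init_ts (mgam G)).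
Proof.
split => //.
- by move=> [|x s] //; rewrite eff_label_SBox.
- by move=> [|x s]; rewrite eff_label_SBox.
- by move=> [|x s]; rewrite eff_label_SBox.
- by left.
- by move=> pi i p [[_ [? //]]|[_ _ [? [? [? [//]]]]]|[kap [r]]]; rewrite eff_label_SBox; case: pi.
Qed.

Hypothesis wfG : wf_pmcfg G.

Lemma rule_k_gt0 r : List.In r (rules G) -> 0 < k.
Proof.
move=> Hr; have [_ [_ [sort_gt0 [_ wf_rules]]]] := wfG.
apply: leq_trans (proj2 (kG Hr)); rewrite /fanout (proj1 (wf_rules r Hr)); exact: sort_gt0.
Qed.

Lemma inv_step h q ts w t q1 ts1 w1 :
  Inv h q ts -> List.In t (M_trans G) -> step (M := M) t (q, ts, w) (q1, ts1, w1) ->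
  Inv (rcons h (t, (q1, ts1, w1))) q1 ts1.
Proof.
move=> I /M_transP[r Hr|r||r i j a|r i j kap m r' Hocc|r i j kap m Hocc
                  |r i j kap m r' Eocc|r i j r' m|r i j] /= [Eq [Eq1 [_ [Hh Happ]]]];
  subst q q1.
- exact: inv_start (rule_k_gt0 Hr) I Happ.
- exact: inv_finish I Hh Happ.
- exact: inv_finish_down I Happ.
- by case: Happ => <-; apply: inv_read.
- exact: inv_call I Hocc Happ.
- exact: inv_resume_up I Hocc Happ.
- exact: inv_resume_set I Eocc Hh Happ.
- exact: inv_return I Hh Happ.
- exact: inv_return_down I Happ.
Qed.

Lemma inv_run l h q ts w :
  Inv h q ts -> is_run (M := M) (q, ts, w) l -> exists q' ts', Inv (h ++ l) q' ts'.
Proof.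
elim: l h q ts w => [|[t [[q1 ts1] w1]] l IH] h q ts w I /=.
  by exists q, ts; rewrite cats0.
by move=> [Ht [Hs Hl]]; rewrite -cat_rcons; apply: IH (inv_step I Ht Hs) Hl.
Qed.

End Restricted.

Theorem mainTheorem4 (G : pmcfg) (k : nat) :
  wf_pmcfg G -> is_kMCFG G k -> k_restricted (M_of G) k.
Proof.
move=> wfG kG w l [run_l _] rho.
have [q [ts I]] := inv_run kG wfG (inv_init G k) run_l.
exact: (moves_le kG rho I).
Qed.
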